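(* Let $\mu$ be a finite positive Borel measure on $\mathbb{T}$ with $\mu^c\ll\mu$, and let $h = d\mu^c/d\mu$. Let $\mathcal{H}$ be a separable complex Hilbert space and $J$ a conjugation on $\mathcal{H}$. Define $\mathbf{J}^\#$ on $\mathscr{L}^2(\mu,\mathcal{H})$ by $$(\mathbf{J}^\#\mathbf{f})(\xi) = h(\xi)^{1/2} J(\mathbf{f}(\overline{\xi}))\quad\text{for } \mu\text{-a.e. } \xi\in\mathbb{T}.$$ Then (a) $\mathbf{J}^\#$ is a conjugation on $\mathscr{L}^2(\mu,\mathcal{H})$, and (b) $\mathbf{J}^\#\mathbf{M}_\xi\mathbf{J}^\# = \mathbf{M}_\xi$.
   Context: A conjugation is an antilinear, isometric map $C$ with $C^2 = I$. $\mu^c(\Omega) := \mu(\{\overline{\xi}:\xi\in\Omega\})$. $\mathscr{L}^2(\mu,\mathcal{H})$ is the space of (classes of) $\mu$-measurable $\mathcal{H}$-valued functions $\mathbf{f}$ on $\mathbb{T}$ with $\int \|\mathbf{f}(\xi)\|_{\mathcal{H}}^2\,d\mu(\xi)<\infty$, and $(\mathbf{M}_\xi\mathbf{f})(\xi) = \xi\mathbf{f}(\xi)$. (Since $\mu^c\ll\mu$ implies $\mu\ll\mu^c$, $\mathbf{f}(\overline{\xi})$ is well defined $\mu$-a.e.) *)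

From HB Require Import structures.
From mathcomp Require Import all_boot all_order all_algebra.
From mathcomp Require Import all_classical all_reals all_analysis.
From mathcomp Require Export complex.
Set Implicit Arguments. Unset Strict Implicit. Unset Printing Implicit Defensive.
Import Order.TTheory GRing.Theory Num.Theory.
Local Open Scope ring_scope.
Local Open Scope classical_set_scope.

Definition circle {R : realType} : set (R * R)%type :=
  [set p | p.1 ^+ 2 + p.2 ^+ 2 = 1].
Definition cconj {R : realType} (p : (R * R)%type) : (R * R)%type := (p.1, - p.2).
Definition cpt {R : realType} (p : (R * R)%type) : R[i] := (p.1 +i* p.2)%C.

Section Hilbert.
Context {R : realType} {H : lmodType R[i]} (ip : H -> H -> R[i]).

Definition hnorm (x : H) : R := Num.sqrt (complex.Re (ip x x)).

Definition inner_product_axioms : Prop :=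
  [/\ forall (a : R[i]) (x y z : H), ip (a *: x + y) z = a * ip x z + ip y z,
      forall x y : H, ip y x = conjc (ip x y),
      forall x : H, complex.Im (ip x x) = 0 /\ 0 <= complex.Re (ip x x)
    & forall x : H, ip x x = 0 -> x = 0].

Definition hcomplete : Prop :=
  forall u : nat -> H,
    (forall e : R, 0 < e -> exists N, forall m n, (N <= m)%N -> (N <= n)%N ->
        hnorm (u m - u n) < e) ->
    exists l : H, forall e : R, 0 < e -> exists N, forall n, (N <= n)%N ->
        hnorm (u n - l) < e.

Definition hseparable : Prop :=
  exists d : nat -> H, forall (x : H) (e : R), 0 < e -> exists n, hnorm (x - d n) < e.

Definition is_separable_hilbert : Prop :=
  [/\ inner_product_axioms, hcomplete & hseparable].

Definition is_conjugation (J : H -> H) : Prop :=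
  [/\ forall (a : R[i]) (x y : H), J (a *: x + y) = conjc a *: J x + J y,
      forall x : H, hnorm (J x) = hnorm x
    & forall x : H, J (J x) = x].

(* (weak) measurability of an H-valued function; for separable H this is
   equivalent to strong measurability (Pettis) *)
Definition hmeasurable (f : (R * R)%type -> H) : Prop :=
  forall v : H, measurable_fun setT (fun x => complex.Re (ip (f x) v)) /\
                measurable_fun setT (fun x => complex.Im (ip (f x) v)).

Definition L2 (mu : {measure set (R * R)%type -> \bar R}) (f : (R * R)%type -> H)
  : Prop :=
  hmeasurable f /\ (\int[mu]_x ((hnorm (f x)) ^+ 2)%:E < +oo)%E.

Definition L2norm2 (mu : {measure set (R * R)%type -> \bar R}) (f : (R * R)%type -> H)
  : \bar R := \int[mu]_x ((hnorm (f x)) ^+ 2)%:E.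

End Hilbert.

Definition Jsharp {R : realType} {H : lmodType R[i]} (J : H -> H)
  (h : (R * R)%type -> R) (f : (R * R)%type -> H) : (R * R)%type -> H :=
  fun x => (Num.sqrt (h x))%:C%C *: J (f (cconj x)).

Definition Mxi {R : realType} {H : lmodType R[i]} (f : (R * R)%type -> H)
  : (R * R)%type -> H :=
  fun x => cpt x *: f x.

(* Since h is the density of mu^c with respect to mu, the substitution
   xi |-> conj xi turns \int h(xi) G(conj xi) dmu into \int G dmu for every
   G >= 0.  With G = ||f||^2 this makes J^# isometric; with G = h 1_{conj E}
   it gives \int_E h(xi) h(conj xi) dmu = mu(E), so h(xi) h(conj xi) = 1
   mu-a.e. and J^# J^# f = (h (h o conj))^{1/2} f = f a.e.  Antilinearity is
   pointwise, and so is J^# M_xi = M_xi J^#, because J is antilinear and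
   conj (conj xi) = xi.  Measurability of ||f||^2 comes from separability:
   ||y||^2 = sup_n (2 Re <y, d_n> - ||d_n||^2) for a dense sequence (d_n). *)

From HB Require Import structures.
From mathcomp Require Import all_boot all_order all_algebra.
From mathcomp Require Import all_classical all_reals all_analysis.
From mathcomp Require Import complex measurable_realfun.
From mathcomp Require Import ring lra.
Import Order.TTheory GRing.Theory Num.Theory.
Local Open Scope ring_scope.
Local Open Scope classical_set_scope.

Section inner_product.
Context {R : realType} {H : lmodType R[i]} {ip : H -> H -> R[i]}.
Hypothesis ipP : inner_product_axioms ip.

Lemma ipDZl a x y z : ip (a *: x + y) z = a * ip x z + ip y z.
Proof. by case: ipP. Qed.

Lemma ipC x y : ip y x = conjc (ip x y).
Proof. by case: ipP. Qed.

Lemma ip0l z : ip 0 z = 0.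
Proof.
have := ipDZl 1 0 0 z; rewrite scaler0 addr0 mul1r => ip0D.
by apply/(@addrI _ (ip 0 z)); rewrite addr0 -ip0D.
Qed.

Lemma ipZl a x z : ip (a *: x) z = a * ip x z.
Proof. by rewrite -[a *: x]addr0 ipDZl ip0l addr0. Qed.

Lemma ipDl x y z : ip (x + y) z = ip x z + ip y z.
Proof. by rewrite -[x]scale1r ipDZl mul1r scale1r. Qed.

Lemma ipNl x z : ip (- x) z = - ip x z.
Proof. by rewrite -scaleN1r ipZl mulN1r. Qed.

Lemma ipZr a x z : ip z (a *: x) = conjc a * ip z x.
Proof. by rewrite ipC ipZl rmorphM /= -ipC. Qed.

Lemma ipDr x y z : ip z (x + y) = ip z x + ip z y.
Proof. by rewrite ipC ipDl rmorphD /= -!ipC. Qed.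

Lemma ipNr x z : ip z (- x) = - ip z x.
Proof. by rewrite ipC ipNl rmorphN /= -ipC. Qed.

Lemma hnorm2 x : hnorm ip x ^+ 2 = complex.Re (ip x x).
Proof. by rewrite sqr_sqrtr //; case: ipP => _ _ /(_ x) []. Qed.

Lemma hnorm2_scale_real (r : R) x : hnorm ip (r%:C%C *: x) ^+ 2 = r ^+ 2 * hnorm ip x ^+ 2.
Proof. by rewrite !hnorm2 ipZl ipZr conjc_real; case: (ip x x) => a b /=; ring. Qed.

Lemma Re_ipBB x y : complex.Re (ip (x - y) (x - y)) =
  complex.Re (ip x x) - 2 * complex.Re (ip x y) + complex.Re (ip y y).
Proof.
rewrite ipDl ipNl !ipDr !ipNr (ipC x y).
by case: (ip x x) (ip x y) (ip y y) => [a b] [c e] [f g] /=; ring.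
Qed.

Context {J : H -> H}.
Hypothesis JP : is_conjugation ip J.

Lemma JK : involutive J.
Proof. by case: JP. Qed.

Lemma JDZ a x y : J (a *: x + y) = conjc a *: J x + J y.
Proof. by case: JP. Qed.

Lemma J0 : J 0 = 0.
Proof.
have := JDZ 1 0 0; rewrite scaler0 addr0 rmorph1 scale1r => J0D.
by apply/(@addrI _ (J 0)); rewrite addr0 -J0D.
Qed.

Lemma JZ a x : J (a *: x) = conjc a *: J x.
Proof. by rewrite -[a *: x]addr0 JDZ J0 addr0. Qed.

Lemma JD x y : J (x + y) = J x + J y.
Proof. by rewrite -[x]scale1r JDZ rmorph1 !scale1r. Qed.

Lemma hnorm2J x : hnorm ip (J x) ^+ 2 = hnorm ip x ^+ 2.
Proof. by case: JP => _ ->. Qed.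

Lemma Re_ipJJ x y : complex.Re (ip (J x) (J y)) = complex.Re (ip x y).
Proof.
have Re_ipJ z : complex.Re (ip (J z) (J z)) = complex.Re (ip z z).
  by rewrite -!hnorm2 hnorm2J.
have := Re_ipJ x; have := Re_ipJ y; have := Re_ipJ (x + y).
rewrite JD !ipDl !ipDr (ipC (J x) (J y)) (ipC x y).
case: (ip (J x) (J x)) (ip (J x) (J y)) (ip (J y) (J y)) => [a1 b1] [a2 b2] [a3 b3].
by case: (ip x x) (ip x y) (ip y y) => [c1 d1] [c2 d2] [c3 d3] /=; lra.
Qed.

(* Polarization: the real parts at [x] and at ['i x] determine the inner product. *)
Lemma ipJJ x y : ip (J x) (J y) = conjc (ip x y).
Proof.
have := Re_ipJJ ('i%C *: x) y; rewrite JZ !ipZl.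
have := Re_ipJJ x y.
by case: (ip (J x) (J y)) (ip x y) => [a b] [c d] /= ? ?; congr (_ +i* _)%C; lra.
Qed.

Lemma ipJl x y : ip (J x) y = conjc (ip x (J y)).
Proof. by rewrite -{1}(JK y) ipJJ. Qed.

End inner_product.

Section finite_measure_of.
Context {d} {T : measurableType d} {R : realType} {mu : {measure set T -> \bar R}}.

(* The finiteness proof is an argument so that the instance below can be keyed on it. *)
Definition finite_measure_of of (mu setT < +oo)%E : set T -> \bar R := mu.

Variable mu_fin : (mu setT < +oo)%E.
HB.instance Definition _ := Measure.on (finite_measure_of mu_fin).
HB.instance Definition _ :=
  Measure_isFinite.Build _ _ _ (finite_measure_of mu_fin) (lty_fin_num_fun mu_fin).

End finite_measure_of.

Section integral_density.
Local Open Scope ereal_scope.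
Context d (T : measurableType d) (R : realType).
Variables (mu : {sigma_finite_measure set T -> \bar R})
  (nu : {finite_measure set T -> \bar R}) (h : T -> R).
Hypothesis mh : measurable_fun setT h.
Hypothesis nuE : forall A, measurable A -> nu A = \int[mu]_(x in A) (h x)%:E.

Let nu_dominates : nu `<< mu.
Proof.
apply/null_content_dominatesP => A mA muA0; rewrite nuE//; apply: null_set_integral => //.
exact/measurable_funTS/measurable_EFinP.
Qed.

Let mEh : measurable_fun setT (EFin \o h).
Proof. exact/measurable_EFinP. Qed.

Lemma Radon_Nikodym_SigmaFinite_ae :
  ae_eq mu setT (Radon_Nikodym_SigmaFinite.f nu mu) (EFin \o h).
Proof.
apply: integral_ae_eq => //; first exact: Radon_Nikodym_SigmaFinite.f_integrable.
by move=> A _ mA; rewrite -Radon_Nikodym_SigmaFinite.f_integral// nuE.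
Qed.

Lemma ge0_integral_density f : (forall x, 0 <= f x) -> measurable_fun setT f ->
  \int[nu]_x f x = \int[mu]_x (f x * (h x)%:E).
Proof.
move=> f0 mf.
rewrite -(Radon_Nikodym_SigmaFinite.change_of_variables nu_dominates f0 measurableT mf).
apply: ae_eq_integral => //.
- apply: emeasurable_funM => //.
  exact: measurable_int (Radon_Nikodym_SigmaFinite.f_integrable nu_dominates).
- exact: emeasurable_funM.
- exact: ae_eqe_mul2l Radon_Nikodym_SigmaFinite_ae.
Qed.

End integral_density.

Lemma cconjK {R : realType} : involutive (@cconj R).
Proof. by case=> a b; rewrite /cconj /= opprK. Qed.

Lemma image_cconj {R : realType} (A : set (R * R)%type) : cconj @` A = cconj @^-1` A.
Proof.
apply/seteqP; split=> [_ [y Ay <-]|x Ax]; first by rewrite /preimage /= cconjK.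
by exists (cconj x); rewrite ?cconjK.
Qed.

Lemma measurable_cconj {R : realType} : measurable_fun setT (@cconj R).
Proof. by apply: measurable_fun_pair => //=; exact: measurableT_comp. Qed.

Section conjugate_density.
Local Open Scope ereal_scope.
Context {R : realType} {mu : {measure set (R * R)%type -> \bar R}}
  {h : (R * R)%type -> R}.
Hypothesis mu_fin : mu setT < +oo.
Hypotheses (mh : measurable_fun setT h) (h_ge0 : forall x, (0 <= h x)%R).
Hypothesis conj_density :
  forall A, measurable A -> mu (cconj @` A) = \int[mu]_(x in A) (h x)%:E.

Let mu_conj := pushforward mu (@cconj R).
Let mc := @measurable_cconj R.

Let mu_conj0 : mu_conj set0 = 0. Proof. exact: measure0. Qed.
Let mu_conj_ge0 A : 0 <= mu_conj A. Proof. exact: measure_ge0. Qed.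
Let mu_conj_sigma_additive : semi_sigma_additive mu_conj.
Proof. exact: measure_semi_sigma_additive. Qed.
HB.instance Definition _ := isMeasure.Build _ _ _ mu_conj
  mu_conj0 mu_conj_ge0 mu_conj_sigma_additive.

Let mu_conj_fin : fin_num_fun mu_conj.
Proof.
move=> A mA; apply: (fin_num_measure (finite_measure_of mu_fin)).
by rewrite -[X in measurable X]setTI; exact: mc.
Qed.
HB.instance Definition _ := Measure_isFinite.Build _ _ _ mu_conj mu_conj_fin.

Lemma ge0_integral_conj_density G : (forall x, 0 <= G x) -> measurable_fun setT G ->
  \int[mu]_x ((h x)%:E * G (cconj x)) = \int[mu]_x G x.
Proof.
move=> G0 mG; have mGc : measurable_fun setT (G \o cconj) by exact: measurableT_comp.
under eq_integral do rewrite muleC.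
rewrite -(@ge0_integral_density _ _ _ (finite_measure_of mu_fin) mu_conj h) //.
- rewrite ge0_integral_pushforward //.
  by apply: eq_integral => x _ /=; rewrite cconjK.
- by move=> A mA; rewrite -conj_density// image_cconj.
Qed.

Lemma mul_density_cconj_ae : {ae mu, forall x, (h x * h (cconj x) = 1)%R}.
Proof.
have mhh : measurable_fun setT (fun x => (h x * h (cconj x))%:E).
  by apply/measurable_EFinP; apply: measurable_funM => //; exact: measurableT_comp.
have : ae_eq mu setT (cst 1) (fun x => (h x * h (cconj x))%:E).
  apply: integral_ae_eq => //.
    by apply/integrableP; split => //; rewrite integral_cst // normr1 mul1e.
  move=> E _ mE; rewrite integral_cst // mul1e.
  have mcE : measurable (cconj @^-1` E) by rewrite -[X in measurable X]setTI; exact: mc.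
  pose G := (EFin \o h) \_ (cconj @^-1` E).
  transitivity (\int[mu]_x ((h x)%:E * G (cconj x))).
    rewrite (ge0_integral_conj_density G); last 2 first.
    - by move=> x; rewrite /G /patch; case: ifP; rewrite ?lee_fin.
    - apply: (measurable_restrictT _ mcE).1; apply: measurable_funTS; exact/measurable_EFinP.
    rewrite -integral_mkcond -conj_density // image_preimage //.
    by apply/seteqP; split=> // x _; exists (cconj x); rewrite ?cconjK.
  rewrite integral_mkcond; apply: eq_integral => x _; rewrite /G /patch /=.
  have -> : (cconj x \in cconj @^-1` E) = (x \in E).
    by apply/idP/idP; rewrite !inE /preimage /= cconjK.
  by case: ifP; rewrite ?mule0.
by apply: filterS => x /(_ I) [].
Qed.

End conjugate_density.

Lemma ae_cconj {R : realType} {mu : {measure set (R * R)%type -> \bar R}}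
    {P : (R * R)%type -> Prop} :
  (forall A, measurable A -> mu A = 0%E -> mu (cconj @` A) = 0%E) ->
  {ae mu, forall x, P x} -> {ae mu, forall x, P (cconj x)}.
Proof.
move=> conj_null [N [mN N0 notPN]]; exists (cconj @` N); split.
- by rewrite image_cconj -[X in measurable X]setTI; exact: measurable_cconj.
- exact: conj_null.
- by move=> x /= notPcx; exists (cconj x); [exact: notPN | rewrite cconjK].
Qed.

Section hnorm2_measurable.
Context {R : realType} {H : lmodType R[i]} {ip : H -> H -> R[i]}.
Hypothesis ipP : inner_product_axioms ip.

(* [||y||^2 - (2 Re <y, z> - ||z||^2) = ||y - z||^2], which a dense sequence makes arbitrarily small. *)
Lemma hnorm2_esups (s : nat -> H) :
    (forall (x : H) (e : R), 0 < e -> exists n, hnorm ip (x - s n) < e) ->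
  forall y, (hnorm ip y ^+ 2)%:E =
    esups (fun n => (2 * complex.Re (ip y (s n)) - complex.Re (ip (s n) (s n)))%:E) 0.
Proof.
move=> s_dense y; apply/eqP; rewrite eq_le; apply/andP; split.
- apply/lee_addgt0Pr => e e0.
  have [|n] := s_dense y (Num.sqrt e); first by rewrite sqrtr_gt0.
  rewrite /hnorm ltr_sqrt // (Re_ipBB ipP) => yn_small.
  apply: le_trans (leeD2r _ (ereal_sup_ubound _)); last by exists n.
  by rewrite -EFinD lee_fin (hnorm2 ipP); lra.
- apply: ge_ereal_sup => _ [n _ <-]; rewrite lee_fin (hnorm2 ipP).
  by have := sqr_ge0 (hnorm ip (y - s n)); rewrite (hnorm2 ipP) (Re_ipBB ipP); lra.
Qed.

Lemma measurable_hnorm2 (f : (R * R)%type -> H) :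
  hseparable ip -> hmeasurable ip f ->
  measurable_fun setT (fun x => (hnorm ip (f x) ^+ 2)%:E).
Proof.
move=> [s s_dense] mf; rewrite (funext (fun x => hnorm2_esups _ s_dense (f x))).
apply: measurable_fun_esups => n; apply/measurable_EFinP.
by apply: measurable_funB => //; apply: measurable_funM => //; exact: (mf (s n)).1.
Qed.

End hnorm2_measurable.

Section Jsharp.
Context {R : realType} {H : lmodType R[i]} {ip : H -> H -> R[i]} {J : H -> H}.
Context {h : (R * R)%type -> R}.
Hypotheses (ipP : inner_product_axioms ip) (JP : is_conjugation ip J).

Lemma Jsharp_antilinear a f g x :
  Jsharp J h (fun y => a *: f y + g y) x = conjc a *: Jsharp J h f x + Jsharp J h g x.
Proof. by rewrite /Jsharp (JDZ JP) scalerDr !scalerA mulrC. Qed.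

Lemma Jsharp_Mxi f x : Jsharp J h (Mxi f) x = Mxi (Jsharp J h f) x.
Proof.
rewrite /Jsharp /Mxi (JZ JP) !scalerA mulrC; congr (_ * _ *: _).
by case: x => a b; rewrite /cpt /cconj /= opprK.
Qed.

Hypothesis h_ge0 : forall x, 0 <= h x.

Lemma hnorm2_Jsharp f x : hnorm ip (Jsharp J h f x) ^+ 2 = h x * hnorm ip (f (cconj x)) ^+ 2.
Proof. by rewrite /Jsharp (hnorm2_scale_real ipP) (hnorm2J JP) sqr_sqrtr. Qed.

Lemma JsharpK_at f x : h x * h (cconj x) = 1 -> Jsharp J h (Jsharp J h f) x = f x.
Proof.
move=> hhc; rewrite /Jsharp cconjK (JZ JP) (JK JP) scalerA conjc_real -rmorphM /=.
by rewrite -sqrtrM // hhc sqrtr1 scale1r.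
Qed.

Hypothesis mh : measurable_fun setT h.

Lemma hmeasurable_Jsharp f : hmeasurable ip f -> hmeasurable ip (Jsharp J h f).
Proof.
move=> mf v; have [mRe mIm] := mf (J v).
have msqrt : measurable_fun setT (fun x => Num.sqrt (h x)).
  exact: measurableT_comp (continuous_measurable_fun (@sqrt_continuous R)) mh.
have ipE x : ip (Jsharp J h f x) v =
    (Num.sqrt (h x))%:C%C * conjc (ip (f (cconj x)) (J v)).
  by rewrite /Jsharp (ipZl ipP) (ipJl ipP JP).
split.
- rewrite (_ : (fun x => _) =
    fun x => Num.sqrt (h x) * complex.Re (ip (f (cconj x)) (J v))).
    by apply: measurable_funM => //; exact: measurableT_comp mRe measurable_cconj.
  by apply/funext => x; rewrite ipE; case: (ip _ _) => a b /=; ring.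
- rewrite (_ : (fun x => _) =
    fun x => - (Num.sqrt (h x) * complex.Im (ip (f (cconj x)) (J v)))).
    apply: measurableT_comp => //; apply: measurable_funM => //.
    exact: measurableT_comp mIm measurable_cconj.
  by apply/funext => x; rewrite ipE; case: (ip _ _) => a b /=; ring.
Qed.

End Jsharp.

Section Jsharp_L2.
Context {R : realType} {mu : {measure set (R * R)%type -> \bar R}}.
Context {H : lmodType R[i]} {ip : H -> H -> R[i]} {J : H -> H} {h : (R * R)%type -> R}.
Hypothesis mu_fin : (mu setT < +oo)%E.
Hypotheses (mh : measurable_fun setT h) (h_ge0 : forall x, 0 <= h x).
Hypothesis conj_density :
  forall A, measurable A -> mu (cconj @` A) = (\int[mu]_(x in A) (h x)%:E)%E.
Hypotheses (ipP : inner_product_axioms ip) (ip_sep : hseparable ip).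
Hypothesis JP : is_conjugation ip J.

Lemma L2norm2_Jsharp f : hmeasurable ip f -> L2norm2 ip mu (Jsharp J h f) = L2norm2 ip mu f.
Proof.
move=> mf; rewrite /L2norm2; under eq_integral do rewrite hnorm2_Jsharp // EFinM.
apply: ge0_integral_conj_density => //; first by move=> x; rewrite lee_fin sqr_ge0.
exact: measurable_hnorm2.
Qed.

Lemma L2_Jsharp f : L2 ip mu f -> L2 ip mu (Jsharp J h f).
Proof.
move=> [mf f_fin]; split; first exact: hmeasurable_Jsharp.
by have := L2norm2_Jsharp f mf; rewrite /L2norm2 => ->.
Qed.

Lemma JsharpK_ae f : {ae mu, forall x, Jsharp J h (Jsharp J h f) x = f x}.
Proof.
apply: filterS (mul_density_cconj_ae mu_fin mh h_ge0 conj_density) => x.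
exact: JsharpK_at JP h_ge0 f x.
Qed.

End Jsharp_L2.

Theorem proposition5p3 (R : realType)
  (mu : {measure set (R * R)%type -> \bar R})
  (H : lmodType R[i]) (ip : H -> H -> R[i]) (J : H -> H)
  (h : (R * R)%type -> R) :
  (* mu is a finite positive Borel measure on T *)
  (mu setT < +oo)%E ->
  mu (~` circle) = 0%E ->
  (* mu^c << mu *)
  (forall A, measurable A -> mu A = 0%E -> mu (cconj @` A) = 0%E) ->
  (* h = d mu^c / d mu *)
  measurable_fun setT h -> (forall x, 0 <= h x) ->
  (forall A, measurable A -> mu (cconj @` A) = (\int[mu]_(x in A) (h x)%:E)%E) ->
  (* H separable complex Hilbert space, J a conjugation on H *)
  is_separable_hilbert ip -> is_conjugation ip J ->
  (* (a) J^# is a (well-defined) conjugation on L^2(mu, H) *)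
  ((forall f, L2 ip mu f -> L2 ip mu (Jsharp J h f)) /\
   (forall f g, L2 ip mu f -> L2 ip mu g -> {ae mu, forall x, f x = g x} ->
      {ae mu, forall x, Jsharp J h f x = Jsharp J h g x}) /\
   (forall (a : R[i]) f g, L2 ip mu f -> L2 ip mu g ->
      {ae mu, forall x, Jsharp J h (fun y => a *: f y + g y) x
                        = conjc a *: Jsharp J h f x + Jsharp J h g x}) /\
   (forall f, L2 ip mu f -> L2norm2 ip mu (Jsharp J h f) = L2norm2 ip mu f) /\
   (forall f, L2 ip mu f -> {ae mu, forall x, Jsharp J h (Jsharp J h f) x = f x})) /\
  (* (b) J^# M_xi J^# = M_xi *)
  (forall f, L2 ip mu f ->
     {ae mu, forall x, Jsharp J h (Mxi (Jsharp J h f)) x = Mxi f x}).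
Proof.
move=> mu_fin _ conj_null mh h_ge0 conj_density [ipP _ ip_sep] JP.
have JsharpK f := JsharpK_ae mu_fin mh h_ge0 conj_density JP f.
split; first split.
- exact: L2_Jsharp.
- split.
    move=> f g _ _ /(ae_cconj conj_null) /filterS; apply => x fg.
    by rewrite /Jsharp fg.
  split; first by move=> a f g _ _; apply: aeW => x; rewrite (Jsharp_antilinear JP).
  split; last by move=> f _; exact: JsharpK.
  by move=> f [mf _]; exact: L2norm2_Jsharp.
- move=> f _; apply: filterS (JsharpK f) => x JJfx.
  by rewrite (Jsharp_Mxi JP) /Mxi JJfx.
Qed.
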